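(* Let $Y$ be a fixed point combinator, and let $A_Y \equiv Y(\lambda z.\, f^\star z z)$ where $f^\star$ is a marked variable not occurring in $Y$. For every $M$ with $A_Y \twoheadrightarrow_\beta M$ there exists a balanced $N$ with $M \twoheadrightarrow_\beta N$.
   Context: Untyped $\lambda$-calculus modulo $\alpha$. A fixed point combinator is a term $Y$ with $Yx=_\beta x(Yx)$ for a variable $x$ not free in $Y$. The variable $f^\star$ marks the displayed occurrence of $f$ in $Y(\lambda z.fzz)$; its free occurrences in reducts of $A_Y$ are the descendants of that occurrence. A reduct $M$ of $A_Y$ is balanced if for every subterm of $M$ of the form $f^\star\, s\, t$ one has $s\equiv t$ (syntactic equality modulo $\alpha$). *)

(* Untyped lambda calculus, de Bruijn indices (so syntactic
   equality is equality modulo alpha), with an extra constant [Mark]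
   representing the marked free variable f^star. *)
From Stdlib Require Import Arith Relations.

Inductive term : Type :=
| Var : nat -> term
| App : term -> term -> term
| Lam : term -> term
| Mark : term.

Fixpoint lift (k c : nat) (t : term) : term :=
  match t with
  | Var n => if n <? c then Var n else Var (n + k)
  | App t1 t2 => App (lift k c t1) (lift k c t2)
  | Lam t1 => Lam (lift k (S c) t1)
  | Mark => Mark
  end.

Fixpoint subst (j : nat) (s : term) (t : term) : term :=
  match t with
  | Var n => if n =? j then lift j 0 s
             else if j <? n then Var (pred n) else Var n
  | App t1 t2 => App (subst j s t1) (subst j s t2)
  | Lam t1 => Lam (subst (S j) s t1)
  | Mark => Mark
  end.

Inductive beta : term -> term -> Prop :=
| beta_redex : forall t u, beta (App (Lam t) u) (subst 0 u t)
| beta_appl : forall t t' u, beta t t' -> beta (App t u) (App t' u)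
| beta_appr : forall t u u', beta u u' -> beta (App t u) (App t u')
| beta_lam : forall t t', beta t t' -> beta (Lam t) (Lam t').

Definition beta_star : term -> term -> Prop := clos_refl_trans term beta.
Definition beta_eq : term -> term -> Prop := clos_refl_sym_trans term beta.

Fixpoint free_in (n : nat) (t : term) : bool :=
  match t with
  | Var m => m =? n
  | App t1 t2 => free_in n t1 || free_in n t2
  | Lam t1 => free_in (S n) t1
  | Mark => false
  end.

Fixpoint has_mark (t : term) : bool :=
  match t with
  | Var _ => false
  | App t1 t2 => has_mark t1 || has_mark t2
  | Lam t1 => has_mark t1
  | Mark => true
  end.

Definition fixed_point_combinator (Y : term) : Prop :=
  exists x : nat, free_in x Y = false /\
    beta_eq (App Y (Var x)) (App (Var x) (App Y (Var x))).

Definition A_ (Y : term) : term := App Y (Lam (App (App Mark (Var 0)) (Var 0))).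

Inductive subterm : term -> term -> Prop :=
| sub_refl : forall t, subterm t t
| sub_appl : forall s t u, subterm s t -> subterm s (App t u)
| sub_appr : forall s t u, subterm s u -> subterm s (App t u)
| sub_lam : forall s t, subterm s t -> subterm s (Lam t).

Definition balanced (M : term) : Prop :=
  forall s t, subterm (App (App Mark s) t) M -> s = t.

(* Every marked application [f* s t] in a reduct of [A_Y] descends from the
   single redex body [f* z z], so its two arguments are residuals of one common
   term, reduced independently.  We make this precise in an auxiliary calculus
   with a unary constructor [Dup Q] standing for [f* Q Q]: a reduct [M] of
   [A_Y] is represented by a term [P] of that calculus in which every marked
   application [f* A B] of [M] corresponds to some [Dup Q] with [A] and [B]
   represented by reducts of [Q].  By confluence of the auxiliary calculus the
   two reducts can be joined, and reading back [Dup Q] as [f* Q Q] yields the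
   balanced reduct of [M]. *)

From Stdlib Require Import Arith Relations Lia.

Lemma clos_rt_map {A B : Type} (R : relation A) (S : relation B) (f : A -> B) :
  (forall x y, R x y -> clos_refl_trans B S (f x) (f y)) ->
  forall x y, clos_refl_trans A R x y -> clos_refl_trans B S (f x) (f y).
Proof.
  intros Hf x y Hxy; induction Hxy.
  - auto.
  - apply rt_refl.
  - eapply rt_trans; eauto.
Qed.

Lemma clos_rt_map_step {A B : Type} (R : relation A) (S : relation B) (f : A -> B) :
  (forall x y, R x y -> S (f x) (f y)) ->
  forall x y, clos_refl_trans A R x y -> clos_refl_trans B S (f x) (f y).
Proof. intros Hf; apply clos_rt_map; intros; apply rt_step; auto. Qed.

(** * The calculus with duplicated marks *)

Inductive mterm : Type :=
| MVar : nat -> mterm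
| MApp : mterm -> mterm -> mterm
| MLam : mterm -> mterm
| Dup : mterm -> mterm.

Fixpoint mlift (k c : nat) (t : mterm) : mterm :=
  match t with
  | MVar n => if n <? c then MVar n else MVar (n + k)
  | MApp t1 t2 => MApp (mlift k c t1) (mlift k c t2)
  | MLam t1 => MLam (mlift k (S c) t1)
  | Dup t1 => Dup (mlift k c t1)
  end.

Fixpoint msubst (j : nat) (s : mterm) (t : mterm) : mterm :=
  match t with
  | MVar n => if n =? j then mlift j 0 s
              else if j <? n then MVar (pred n) else MVar n
  | MApp t1 t2 => MApp (msubst j s t1) (msubst j s t2)
  | MLam t1 => MLam (msubst (S j) s t1)
  | Dup t1 => Dup (msubst j s t1)
  end.

Ltac index_cases :=
  repeat (simpl; match goal with
   | |- context [?a =? ?b] => destruct (Nat.eqb_spec a b)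
   | |- context [?a <? ?b] => destruct (Nat.ltb_spec a b)
   end); try (f_equal; lia); try lia.

Lemma mlift_mlift_comm u k j c c' : c' <= c ->
  mlift k (j + c) (mlift j c' u) = mlift j c' (mlift k c u).
Proof.
  revert c c'; induction u; intros c c' Hc; simpl.
  - index_cases.
  - f_equal; auto.
  - f_equal. replace (S (j + c)) with (j + S c) by lia. apply IHu; lia.
  - f_equal; auto.
Qed.

Lemma mlift_mlift_merge u i j c c' : c' <= c -> c <= c' + j ->
  mlift i c (mlift j c' u) = mlift (i + j) c' u.
Proof.
  revert c c'; induction u; intros c c' H1 H2; simpl.
  - index_cases.
  - f_equal; auto.
  - f_equal. apply IHu; lia.
  - f_equal; auto.
Qed.

Lemma mlift_msubst t u k j c :
  mlift k (j + c) (msubst j u t) = msubst j (mlift k c u) (mlift k (S (j + c)) t).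
Proof.
  revert j; induction t; intros j; simpl.
  - index_cases; subst. apply (mlift_mlift_comm u k j c 0). lia.
  - f_equal; auto.
  - f_equal. apply (IHt (S j)).
  - f_equal; auto.
Qed.

Lemma msubst_mlift v u i j c : c <= j ->
  msubst (i + j) u (mlift i c v) = mlift i c (msubst j u v).
Proof.
  revert c j; induction v; intros c j Hc; simpl.
  - index_cases; subst. rewrite mlift_mlift_merge by lia. f_equal; lia.
  - f_equal; auto.
  - f_equal. replace (S (i + j)) with (i + S j) by lia. apply IHv; lia.
  - f_equal; auto.
Qed.

Lemma msubst_mlift_cancel t w i k c : c <= i -> i <= c + k ->
  msubst i w (mlift (S k) c t) = mlift k c t.
Proof.
  revert i c; induction t; intros i c H1 H2; simpl.
  - index_cases.
  - f_equal; auto.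
  - f_equal. apply IHt; lia.
  - f_equal; auto.
Qed.

Lemma msubst_msubst t u v i j :
  msubst (i + j) u (msubst i v t) = msubst i (msubst j u v) (msubst (S (i + j)) u t).
Proof.
  revert i; induction t; intros i; simpl.
  - index_cases; subst.
    + apply (msubst_mlift v u i j 0); lia.
    + rewrite msubst_mlift_cancel by lia. f_equal; lia.
  - f_equal; auto.
  - f_equal. apply (IHt (S i)).
  - f_equal; auto.
Qed.

Inductive mbeta : mterm -> mterm -> Prop :=
| mbeta_redex t u : mbeta (MApp (MLam t) u) (msubst 0 u t)
| mbeta_appl t t' u : mbeta t t' -> mbeta (MApp t u) (MApp t' u)
| mbeta_appr t u u' : mbeta u u' -> mbeta (MApp t u) (MApp t u')
| mbeta_lam t t' : mbeta t t' -> mbeta (MLam t) (MLam t')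
| mbeta_dup t t' : mbeta t t' -> mbeta (Dup t) (Dup t').

Definition mbeta_star : mterm -> mterm -> Prop := clos_refl_trans mterm mbeta.

Lemma mbeta_star_app t t' u u' :
  mbeta_star t t' -> mbeta_star u u' -> mbeta_star (MApp t u) (MApp t' u').
Proof.
  intros Ht Hu; apply rt_trans with (MApp t' u).
  - apply (clos_rt_map_step mbeta mbeta (fun x => MApp x u)); [intros; constructor |]; auto.
  - apply (clos_rt_map_step mbeta mbeta (MApp t')); [intros; constructor |]; auto.
Qed.

Lemma mbeta_star_lam t t' : mbeta_star t t' -> mbeta_star (MLam t) (MLam t').
Proof. apply clos_rt_map_step; intros; constructor; auto. Qed.

Lemma mbeta_star_dup t t' : mbeta_star t t' -> mbeta_star (Dup t) (Dup t').
Proof. apply clos_rt_map_step; intros; constructor; auto. Qed.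

Lemma mbeta_mlift t t' k c : mbeta t t' -> mbeta (mlift k c t) (mlift k c t').
Proof.
  intros H; revert c; induction H; intros c; simpl; try (constructor; auto).
  pose proof (mlift_msubst t u k 0 c) as E; simpl in E; rewrite E. constructor.
Qed.

Lemma mbeta_msubst t t' s j : mbeta t t' -> mbeta (msubst j s t) (msubst j s t').
Proof.
  intros H; revert j; induction H; intros j; simpl; try (constructor; auto).
  pose proof (msubst_msubst t s u 0 j) as E; simpl in E; rewrite E. constructor.
Qed.

Lemma mbeta_star_mlift t t' k c :
  mbeta_star t t' -> mbeta_star (mlift k c t) (mlift k c t').
Proof. apply clos_rt_map_step; auto using mbeta_mlift. Qed.

Lemma mbeta_star_msubst t t' s j :
  mbeta_star t t' -> mbeta_star (msubst j s t) (msubst j s t').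
Proof. apply clos_rt_map_step; auto using mbeta_msubst. Qed.

(** * Confluence, by parallel reduction and complete developments *)

Inductive mpar : mterm -> mterm -> Prop :=
| mpar_var n : mpar (MVar n) (MVar n)
| mpar_app t t' u u' : mpar t t' -> mpar u u' -> mpar (MApp t u) (MApp t' u')
| mpar_lam t t' : mpar t t' -> mpar (MLam t) (MLam t')
| mpar_dup t t' : mpar t t' -> mpar (Dup t) (Dup t')
| mpar_redex t t' u u' :
    mpar t t' -> mpar u u' -> mpar (MApp (MLam t) u) (msubst 0 u' t').

Lemma mpar_refl t : mpar t t.
Proof. induction t; constructor; auto. Qed.

Lemma mbeta_mpar t t' : mbeta t t' -> mpar t t'.
Proof. induction 1; constructor; auto using mpar_refl. Qed.

Lemma mpar_mbeta_star t t' : mpar t t' -> mbeta_star t t'.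
Proof.
  induction 1.
  - apply rt_refl.
  - apply mbeta_star_app; auto.
  - apply mbeta_star_lam; auto.
  - apply mbeta_star_dup; auto.
  - eapply rt_trans; [apply mbeta_star_app; [apply mbeta_star_lam|]; eauto|].
    apply rt_step; constructor.
Qed.

Lemma mpar_mlift t t' k c : mpar t t' -> mpar (mlift k c t) (mlift k c t').
Proof.
  intros H; revert c; induction H; intros c; simpl; try (constructor; auto).
  - destruct (n <? c); constructor.
  - pose proof (mlift_msubst t' u' k 0 c) as E; simpl in E; rewrite E.
    constructor; auto.
Qed.

Lemma mpar_msubst t t' s s' j :
  mpar t t' -> mpar s s' -> mpar (msubst j s t) (msubst j s' t').
Proof.
  intros H Hs; revert j; induction H; intros j; simpl; try (constructor; auto).
  - destruct (n =? j); [apply mpar_mlift; auto|]. destruct (j <? n); constructor.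
  - pose proof (msubst_msubst t' s' u' 0 j) as E; simpl in E; rewrite E.
    constructor; auto.
Qed.

Fixpoint develop (t : mterm) : mterm :=
  match t with
  | MVar n => MVar n
  | MApp (MLam b) u => msubst 0 (develop u) (develop b)
  | MApp t1 u => MApp (develop t1) (develop u)
  | MLam t1 => MLam (develop t1)
  | Dup t1 => Dup (develop t1)
  end.

Lemma mpar_develop t t' : mpar t t' -> mpar t' (develop t).
Proof.
  induction 1; simpl; try (constructor; auto; fail).
  - destruct t; try (constructor; auto; fail).
    inversion H; subst. inversion IHmpar1; subst. constructor; auto.
  - apply mpar_msubst; auto.
Qed.

Lemma mbeta_star_mpar_strip a c :
  mbeta_star a c -> forall b, mpar a b -> exists d, mbeta_star b d /\ mpar c d.
Proof.
  intros H; apply clos_rt_rt1n in H; induction H; intros b Hb.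
  - exists b; split; [apply rt_refl | auto].
  - destruct (IHclos_refl_trans_1n (develop x))
      as [d [Hd1 Hd2]]; [apply mpar_develop, mbeta_mpar; auto|].
    exists d; split; auto.
    eapply rt_trans; [apply mpar_mbeta_star, mpar_develop; exact Hb | auto].
Qed.

Lemma mbeta_star_confluent a b c :
  mbeta_star a b -> mbeta_star a c -> exists d, mbeta_star b d /\ mbeta_star c d.
Proof.
  intros H; revert c; apply clos_rt_rt1n in H; induction H; intros c Hc.
  - exists c; split; [auto | apply rt_refl].
  - destruct (mbeta_star_mpar_strip _ _ Hc y (mbeta_mpar _ _ H)) as [d1 [Hd1 Hd2]].
    destruct (IHclos_refl_trans_1n d1 Hd1) as [d [? ?]].
    exists d; split; auto. eapply rt_trans; [apply mpar_mbeta_star; eauto | auto].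
Qed.

(** * Representing reducts of [A_Y] *)

Inductive rep : term -> mterm -> Prop :=
| rep_var n : rep (Var n) (MVar n)
| rep_app M1 M2 P1 P2 : rep M1 P1 -> rep M2 P2 -> rep (App M1 M2) (MApp P1 P2)
| rep_lam M P : rep M P -> rep (Lam M) (MLam P)
| rep_mark A B Q QA QB : mbeta_star Q QA -> mbeta_star Q QB ->
    rep A QA -> rep B QB -> rep (App (App Mark A) B) (Dup Q).

Lemma rep_lift M P k c : rep M P -> rep (lift k c M) (mlift k c P).
Proof.
  intros H; revert c; induction H; intros c; simpl.
  - destruct (n <? c); constructor.
  - constructor; auto.
  - constructor; auto.
  - eapply rep_mark; [apply mbeta_star_mlift; exact H | apply mbeta_star_mlift; exact H0 | auto | auto].
Qed.

Lemma rep_subst M P u U j : rep M P -> rep u U -> rep (subst j u M) (msubst j U P).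
Proof.
  intros H Hu; revert j; induction H; intros j; simpl.
  - destruct (n =? j); [apply rep_lift; auto|]. destruct (j <? n); constructor.
  - constructor; auto.
  - constructor; auto.
  - eapply rep_mark; [apply mbeta_star_msubst; exact H | apply mbeta_star_msubst; exact H0 | auto | auto].
Qed.

Lemma beta_mark_inv A B M' : beta (App (App Mark A) B) M' ->
  (exists A', beta A A' /\ M' = App (App Mark A') B) \/
  (exists B', beta B B' /\ M' = App (App Mark A) B').
Proof.
  intros H; inversion H; subst.
  - match goal with Hm : beta (App Mark A) _ |- _ => inversion Hm; subst end.
    + match goal with Hm : beta Mark _ |- _ => inversion Hm end.
    + left; eauto.
  - right; eauto.
Qed.

(* A step of [M] is matched by reduction of [P]; a step inside a marked
   application is absorbed by the reducts [QA], [QB] and leaves [P] unchanged. *)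
Lemma rep_beta M M' P : rep M P -> beta M M' -> exists P', mbeta_star P P' /\ rep M' P'.
Proof.
  intros H; revert M'; induction H; intros M' Hb.
  - inversion Hb.
  - inversion Hb; subst.
    + inversion H; subst.
      eexists; split; [apply rt_step; constructor | apply rep_subst; auto].
    + destruct (IHrep1 _ ltac:(eassumption)) as [P' [? ?]].
      exists (MApp P' P2); split; [apply mbeta_star_app; [assumption | apply rt_refl] | constructor; auto].
    + destruct (IHrep2 _ ltac:(eassumption)) as [P' [? ?]].
      exists (MApp P1 P'); split; [apply mbeta_star_app; [apply rt_refl | assumption] | constructor; auto].
  - inversion Hb; subst.
    destruct (IHrep _ ltac:(eassumption)) as [P' [? ?]].
    exists (MLam P'); split; [apply mbeta_star_lam | constructor]; auto.
  - exists (Dup Q); split; [apply rt_refl|].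
    destruct (beta_mark_inv _ _ _ Hb) as [[A' [HA ->]] | [B' [HB ->]]].
    + destruct (IHrep1 _ HA) as [QA' [HQA' HA']].
      apply rep_mark with QA' QB; auto. apply rt_trans with QA; assumption.
    + destruct (IHrep2 _ HB) as [QB' [HQB' HB']].
      apply rep_mark with QA QB'; auto. apply rt_trans with QB; assumption.
Qed.

Lemma rep_beta_star M M' P :
  beta_star M M' -> rep M P -> exists P', mbeta_star P P' /\ rep M' P'.
Proof.
  intros H; revert P; induction H; intros P HP.
  - eapply rep_beta; eauto.
  - exists P; split; [apply rt_refl | auto].
  - destruct (IHclos_refl_trans1 P HP) as [P1 [? HP1]].
    destruct (IHclos_refl_trans2 P1 HP1) as [P2 [? ?]].
    exists P2; split; [eapply rt_trans |]; eauto.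
Qed.

Lemma rep_of_mark_free M : has_mark M = false -> exists P, rep M P.
Proof.
  induction M; simpl; intros H; try discriminate.
  - eexists; constructor.
  - apply Bool.orb_false_iff in H as [H1 H2].
    destruct (IHM1 H1), (IHM2 H2). eexists; constructor; eauto.
  - destruct (IHM H). eexists; constructor; eauto.
Qed.

Fixpoint expand (P : mterm) : term :=
  match P with
  | MVar n => Var n
  | MApp a b => App (expand a) (expand b)
  | MLam a => Lam (expand a)
  | Dup a => App (App Mark (expand a)) (expand a)
  end.

Lemma expand_mlift P k c : expand (mlift k c P) = lift k c (expand P).
Proof.
  revert c; induction P; intros c; simpl; rewrite ?IHP, ?IHP1, ?IHP2; auto.
  destruct (n <? c); auto.
Qed.

Lemma expand_msubst P U j : expand (msubst j U P) = subst j (expand U) (expand P).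
Proof.
  revert j; induction P; intros j; simpl; rewrite ?IHP, ?IHP1, ?IHP2; auto.
  destruct (n =? j); [apply expand_mlift|]. destruct (j <? n); auto.
Qed.

Lemma beta_star_app t t' u u' :
  beta_star t t' -> beta_star u u' -> beta_star (App t u) (App t' u').
Proof.
  intros Ht Hu; apply rt_trans with (App t' u).
  - apply (clos_rt_map_step beta beta (fun x => App x u)); [intros; constructor |]; auto.
  - apply (clos_rt_map_step beta beta (App t')); [intros; constructor |]; auto.
Qed.

Lemma beta_star_lam t t' : beta_star t t' -> beta_star (Lam t) (Lam t').
Proof. apply clos_rt_map_step; intros; constructor; auto. Qed.

Lemma expand_mbeta_star P P' : mbeta_star P P' -> beta_star (expand P) (expand P').
Proof.
  apply clos_rt_map; induction 1; simpl.
  - apply rt_step. rewrite expand_msubst. constructor.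
  - apply beta_star_app; [assumption | apply rt_refl].
  - apply beta_star_app; [apply rt_refl | assumption].
  - apply beta_star_lam; assumption.
  - apply beta_star_app; [apply beta_star_app; [apply rt_refl |] |]; assumption.
Qed.

(* The two sides of a marked application are joined by confluence. *)
Lemma rep_expand M P : rep M P -> exists P', mbeta_star P P' /\ beta_star M (expand P').
Proof.
  induction 1 as [n | M1 M2 P1 P2 _ [P1' [HP1 HM1]] _ [P2' [HP2 HM2]]
                 | M P _ [P' [HP HM]] | A B Q QA QB HQA HQB _ [A' [HA HA']] _ [B' [HB HB']]].
  - exists (MVar n); split; apply rt_refl.
  - exists (MApp P1' P2'); split; [apply mbeta_star_app | apply beta_star_app]; assumption.
  - exists (MLam P'); split; [apply mbeta_star_lam | apply beta_star_lam]; assumption.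
  - destruct (mbeta_star_confluent Q A' B') as [Q' [HAQ' HBQ']].
    { apply rt_trans with QA; assumption. }
    { apply rt_trans with QB; assumption. }
    exists (Dup Q'); split.
    + apply mbeta_star_dup. apply rt_trans with QA; [assumption |].
      apply rt_trans with A'; assumption.
    + apply beta_star_app; [apply beta_star_app; [apply rt_refl |] |].
      * apply rt_trans with (expand A'); [| apply expand_mbeta_star]; assumption.
      * apply rt_trans with (expand B'); [| apply expand_mbeta_star]; assumption.
Qed.

Lemma expand_neq_App_Mark P s : expand P <> App Mark s.
Proof. destruct P as [| [] | |]; discriminate. Qed.

Lemma expand_balanced P : balanced (expand P).
Proof.
  unfold balanced; induction P; simpl; intros s t H; inversion H; subst; eauto.
  - exfalso; eapply expand_neq_App_Mark; symmetry; eassumption.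
  - match goal with Hs : subterm _ (App Mark _) |- _ => inversion Hs; subst end.
    + match goal with Hs : subterm _ Mark |- _ => inversion Hs end.
    + eauto.
Qed.

Theorem lemma5p4 (Y : term) :
  fixed_point_combinator Y -> has_mark Y = false ->
  forall M, beta_star (A_ Y) M -> exists N, beta_star M N /\ balanced N.
Proof.
  intros _ HY M HM.
  destruct (rep_of_mark_free Y HY) as [PY HPY].
  assert (HA : rep (A_ Y) (MApp PY (MLam (Dup (MVar 0))))).
  { repeat constructor; auto. eapply rep_mark; apply rt_refl || constructor. }
  destruct (rep_beta_star _ _ _ HM HA) as [P [_ HP]].
  destruct (rep_expand _ _ HP) as [P' [_ HP']].
  exists (expand P'); split; [exact HP' | apply expand_balanced].
Qed.
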